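(* Let $k$ be an infinite field of characteristic $0$, and let $(F,p)$ be the free Lie algebra with projection-derivation over $k$ with free generators $m_1,\dots,m_n$. Put $r=\mathrm{id}_F-p$. Then the representation $(\ker p,\mathrm{im}\,p)$ (with action $l\circ v=[l,v]$) is a free representation with the pair of sets of free generators $\{X,Y\}$, where $X=\{r(m_1),\dots,r(m_n)\}$ and $Y=\{p(m_1),\dots,p(m_n)\}$.
   Context: A Lie algebra with projection-derivation is a Lie algebra $M$ over $k$ with a linear map $p:M\to M$ such that $p(p(m))=p(m)$ and $p[m_1,m_2]=[p(m_1),m_2]+[m_1,p(m_2)]$; homomorphisms are Lie homomorphisms commuting with $p$; these form a variety, so free objects exist. For such $(M,p)$, $\ker p$ is a Lie subalgebra and $\mathrm{im}\,p$ is a $\ker p$-module via $l\circ v=[l,v]$. A representation $(L,V)$ is a Lie algebra $L$ with an $L$-module $V$; a homomorphism $(\varphi,\psi):(L_1,V_1)\to(L_2,V_2)$ is a Lie homomorphism $\varphi$ and linear $\psi$ with $\varphi(l)\circ\psi(v)=\psi(l\circ v)$. $(L,V)$ is free with pair of sets of free generators $\{X,Y\}$ ($X\subset L$, $Y\subset V$) if for every representation $(P,U)$ every pair of maps $X\to P$, $Y\to U$ extends to a homomorphism $(L,V)\to(P,U)$. *)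

From HB Require Import structures.
From mathcomp Require Import all_boot all_order all_algebra.
Set Implicit Arguments. Unset Strict Implicit. Unset Printing Implicit Defensive.
Import GRing.Theory.
Local Open Scope ring_scope.

Section LieDefs.
Variable k : fieldType.

Definition is_linear_map (U V : lmodType k) (f : U -> V) : Prop :=
  forall (a : k) (x y : U), f (a *: x + y) = a *: f x + f y.

Definition lie_bracket (L : lmodType k) (br : L -> L -> L) : Prop :=
  [/\ forall z, is_linear_map (fun x => br x z),
      forall x, is_linear_map (br x),
      forall x, br x x = 0
    & forall x y z, br x (br y z) + br y (br z x) + br z (br x y) = 0].

Definition lie_module (L V : lmodType k) (br : L -> L -> L) (act : L -> V -> V)
  : Prop :=
  [/\ forall v, is_linear_map (fun l => act l v),
      forall l, is_linear_map (act l)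
    & forall l1 l2 v, act (br l1 l2) v = act l1 (act l2 v) - act l2 (act l1 v)].

Definition projection_derivation (M : lmodType k) (br : M -> M -> M) (p : M -> M)
  : Prop :=
  [/\ is_linear_map p,
      forall m, p (p m) = p m
    & forall m1 m2, p (br m1 m2) = br (p m1) m2 + br m1 (p m2)].

Definition pd_hom (M1 : lmodType k) (br1 : M1 -> M1 -> M1) (p1 : M1 -> M1)
  (M2 : lmodType k) (br2 : M2 -> M2 -> M2) (p2 : M2 -> M2) (f : M1 -> M2) : Prop :=
  [/\ is_linear_map f,
      forall x y, f (br1 x y) = br2 (f x) (f y)
    & forall x, f (p1 x) = p2 (f x)].

Definition free_lie_pd (F : lmodType k) (br : F -> F -> F) (p : F -> F)
  (n : nat) (m : 'I_n -> F) : Prop :=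
  forall (M : lmodType k) (brM : M -> M -> M) (q : M -> M),
    lie_bracket brM -> projection_derivation brM q ->
    forall g : 'I_n -> M,
      exists f : F -> M,
        [/\ pd_hom br p brM q f, forall i, f (m i) = g i
          & forall f' : F -> M, pd_hom br p brM q f' ->
              (forall i, f' (m i) = g i) -> forall x, f' x = f x].

(* A sub-representation given by subspaces A of a Lie algebra (L1, br1) and
   B of a space V1 with a bilinear action act1: A is a Lie subalgebra, B is a
   subspace stable under the action of A. (The L-module identities are
   inherited from the ambient structure.) *)
Definition sub_rep (L1 V1 : lmodType k) (br1 : L1 -> L1 -> L1)
  (act1 : L1 -> V1 -> V1) (A : L1 -> Prop) (B : V1 -> Prop) : Prop :=
  [/\ A 0, forall a x y, A x -> A y -> A (a *: x + y)
    & forall x y, A x -> A y -> A (br1 x y)] /\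
  [/\ B 0, forall a u v, B u -> B v -> B (a *: u + v)
    & forall l v, A l -> B v -> B (act1 l v)].

Definition rep_hom_on (L1 V1 : lmodType k) (br1 : L1 -> L1 -> L1)
  (act1 : L1 -> V1 -> V1) (A : L1 -> Prop) (B : V1 -> Prop)
  (P U : lmodType k) (brP : P -> P -> P) (actU : P -> U -> U)
  (phi : L1 -> P) (psi : V1 -> U) : Prop :=
  [/\ forall a x y, A x -> A y -> phi (a *: x + y) = a *: phi x + phi y,
      forall x y, A x -> A y -> phi (br1 x y) = brP (phi x) (phi y),
      forall a u v, B u -> B v -> psi (a *: u + v) = a *: psi u + psi v
    & forall l v, A l -> B v -> actU (phi l) (psi v) = psi (act1 l v)].

Definition free_rep_on (L1 V1 : lmodType k) (br1 : L1 -> L1 -> L1)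
  (act1 : L1 -> V1 -> V1) (A : L1 -> Prop) (B : V1 -> Prop)
  (X : L1 -> Prop) (Y : V1 -> Prop) : Prop :=
  [/\ sub_rep br1 act1 A B,
      forall x, X x -> A x,
      forall y, Y y -> B y
    & forall (P U : lmodType k) (brP : P -> P -> P) (actU : P -> U -> U),
        lie_bracket brP -> lie_module brP actU ->
        forall (f : L1 -> P) (g : V1 -> U),
          exists (phi : L1 -> P) (psi : V1 -> U),
            [/\ rep_hom_on br1 act1 A B brP actU phi psi,
                forall x, X x -> phi x = f x
              & forall y, Y y -> psi y = g y]].

End LieDefs.

(* Given a representation (P, U), the semidirect product P ⋉ U, with bracket
   [(a, u), (b, v)] = ([a, b], a∘v - b∘u), is a Lie algebra and the projection
   (a, u) ↦ (0, u) onto the ideal U is a projection-derivation of it.  The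
   universal property of F yields a homomorphism h : F → P ⋉ U with
   h m_i = (f (r m_i), g (p m_i)); it sends ker p into P × 0 and im p into
   0 × U, so its two components restrict to a homomorphism
   (ker p, im p) → (P, U), and since h commutes with the projections,
   h (r m_i) = (f (r m_i), 0) and h (p m_i) = (0, g (p m_i)). *)
From HB Require Import structures.
From mathcomp Require Import all_boot all_order all_algebra.
Import GRing.Theory.
Set Implicit Arguments. Unset Strict Implicit.
Local Open Scope ring_scope.

Section LinearMaps.
Variables (k : fieldType) (U V : lmodType k) (f : U -> V).
Hypothesis f_lin : is_linear_map f.

Lemma linear_mapD x y : f (x + y) = f x + f y.
Proof. by have := f_lin 1 x y; rewrite !scale1r. Qed.

Lemma linear_map0 : f 0 = 0.
Proof. by apply: (@addrI _ (f 0)); rewrite -linear_mapD !addr0. Qed.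

Lemma linear_mapZ a x : f (a *: x) = a *: f x.
Proof. by have := f_lin a x 0; rewrite !addr0 linear_map0 addr0. Qed.

Lemma linear_mapB x y : f (x - y) = f x - f y.
Proof. by rewrite linear_mapD -scaleN1r linear_mapZ scaleN1r. Qed.

End LinearMaps.

Lemma jacobi_cyclic_cancel (V : zmodType) (a b c d e f : V) :
  a - b - (c - d) + (c - e - (f - b)) + (f - d - (a - e)) = 0.
Proof.
rewrite !opprB !addrA subrK (subrK c) (addrAC _ b) (addrAC _ (-e)) addrK.
by rewrite (addrAC _ b) (subrK e) (subrK b) subrr.
Qed.

Lemma prod_eq (A B : Type) (x y : A * B) : x.1 = y.1 -> x.2 = y.2 -> x = y.
Proof. by case: x y => [? ?] [? ?] /= -> ->. Qed.

Section Semidirect.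
Variables (k : fieldType) (P U : lmodType k).
Variables (brP : P -> P -> P) (actU : P -> U -> U).

Definition semidirect_br (x y : P * U) : P * U :=
  (brP x.1 y.1, actU x.1 y.2 - actU y.1 x.2).

Definition ideal_proj (x : P * U) : P * U := (0, x.2).

Hypothesis brP_lie : lie_bracket brP.
Hypothesis actU_mod : lie_module brP actU.

Lemma semidirect_lie_bracket : lie_bracket semidirect_br.
Proof.
case: brP_lie => PL PR PA PJ; case: actU_mod => AL AR AM.
split.
- move=> z a x y; apply: prod_eq => /=; first exact: PL.
  rewrite AL (linear_mapD (AR z.1)) (linear_mapZ (AR z.1)).
  by rewrite opprD scalerBr addrACA.
- move=> x a y z; apply: prod_eq => /=; first exact: PR.
  rewrite AR (linear_mapD (AL x.2)) (linear_mapZ (AL x.2)).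
  by rewrite opprD scalerBr addrACA.
- by move=> x; apply: prod_eq => /=; rewrite ?PA ?subrr.
- move=> x y z; apply: prod_eq => /=; first exact: PJ.
  by rewrite !AM !(linear_mapB (AR _)) jacobi_cyclic_cancel.
Qed.

Lemma ideal_proj_projection_derivation :
  projection_derivation semidirect_br ideal_proj.
Proof.
case: brP_lie => PL PR _ _; case: actU_mod => AL _ _.
split => //.
- by move=> a x y; apply: prod_eq => //=; rewrite scaler0 addr0.
- move=> x y; apply: prod_eq => /=.
    by rewrite (linear_map0 (PL _)) (linear_map0 (PR _)) addr0.
  by rewrite !(linear_map0 (AL _)) subr0 sub0r addrC.
Qed.

End Semidirect.

Section KernelImage.
Variables (k : fieldType) (F : lmodType k) (br : F -> F -> F) (p : F -> F).
Hypotheses (F_lie : lie_bracket br) (p_pd : projection_derivation br p).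

Let ker_p (x : F) := p x = 0.
Let im_p (v : F) := exists w, v = p w.

Lemma ker_im_sub_rep : sub_rep br br ker_p im_p.
Proof.
case: F_lie => brL brR _ _; case: p_pd => pL pP pD.
have br0l y : br 0 y = 0 by exact: linear_map0 (brL y).
have br0r x : br x 0 = 0 by exact: linear_map0 (brR x).
split; split.
- exact: linear_map0 pL.
- by move=> a x y Hx Hy; rewrite /ker_p pL Hx Hy scaler0 addr0.
- by move=> x y Hx Hy; rewrite /ker_p pD Hx Hy br0l br0r addr0.
- by exists 0; rewrite (linear_map0 pL).
- by move=> a u v [w1 ->] [w2 ->]; exists (a *: w1 + w2); rewrite pL.
- by move=> l v Hl [w ->]; exists (br l (p w)); rewrite pD Hl br0l pP add0r.
Qed.

Lemma pd_hom_semidirect_rep_hom (P U : lmodType k) (brP : P -> P -> P)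
    (actU : P -> U -> U) (h : F -> P * U) :
  lie_module brP actU ->
  pd_hom br p (semidirect_br brP actU) (@ideal_proj k P U) h ->
  rep_hom_on br br ker_p im_p brP actU (fun x => (h x).1) (fun x => (h x).2).
Proof.
move=> [AL _ _] [hL hB hP]; split.
- by move=> a x y _ _; rewrite hL.
- by move=> x y _ _; rewrite hB.
- by move=> a x y _ _; rewrite hL.
- by move=> l v _ [w ->]; rewrite hB /= hP /= (linear_map0 (AL _)) subr0.
Qed.

End KernelImage.

Theorem theorem2 (k : fieldType)
  (k_infinite : forall s : seq k, exists x : k, x \notin s)
  (k_char0 : [pchar k] =i pred0)
  (F : lmodType k) (br : F -> F -> F) (p : F -> F) (n : nat) (m : 'I_n -> F)
  (F_lie : lie_bracket br) (p_pd : projection_derivation br p)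
  (F_free : free_lie_pd br p m) :
  let r := fun x : F => x - p x in
  free_rep_on br br
    (fun x : F => p x = 0)                  (* ker p *)
    (fun v : F => exists w : F, v = p w)    (* im p *)
    (fun x : F => exists i : 'I_n, x = r (m i))   (* X *)
    (fun y : F => exists i : 'I_n, y = p (m i)).  (* Y *)
Proof.
move=> r; have [pL pP _] := p_pd.
split; first exact: ker_im_sub_rep.
- by move=> x [i ->]; rewrite /r (linear_mapB pL) pP subrr.
- by move=> y [i ->]; exists (m i).
move=> P U brP actU P_lie U_mod f g.
have [h [h_hom h_m _]] := F_free _ _ _ (semidirect_lie_bracket P_lie U_mod)
  (ideal_proj_projection_derivation P_lie U_mod)
  (fun i => (f (r (m i)), g (p (m i)))).
have [hL _ hP] := h_hom.
exists (fun x => (h x).1), (fun x => (h x).2); split.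
- exact: pd_hom_semidirect_rep_hom.
- by move=> x [i ->]; rewrite (linear_mapB hL) hP h_m /= subr0.
- by move=> y [i ->]; rewrite hP h_m.
Qed.
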